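(* Let $(X,d)$ be a compact pointed metric space and let $((x_n,y_n))_{n=1}^\infty$ be a Lipschitz interpolating sequence for $\mathrm{Lip}_0(X)$ in $\widetilde X$. Then $d(x_n,y_n)\to 0$ as $n\to\infty$.
   Context: All spaces are real. $(X,d)$ has a base point $0$, $\widetilde{X}=\{(x,y)\in X\times X: x\neq y\}$. $\mathrm{Lip}_0(X)$ is the Banach space of Lipschitz $f:X\to\mathbb{R}$ with $f(0)=0$, normed by the best Lipschitz constant. A sequence $((x_n,y_n))_{n=1}^\infty$ in $\widetilde X$ is Lipschitz interpolating for $\mathrm{Lip}_0(X)$ if the operator $T:\mathrm{Lip}_0(X)\to\ell_\infty$, $T(f)=\big((f(x_n)-f(y_n))/d(x_n,y_n)\big)_{n}$, is surjective. *)

From Stdlib Require Import Reals.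
Open Scope R_scope.

Definition is_metric {X : Type} (d : X -> X -> R) : Prop :=
  (forall x y, 0 <= d x y) /\
  (forall x y, d x y = 0 <-> x = y) /\
  (forall x y, d x y = d y x) /\
  (forall x y z, d x z <= d x y + d y z).

Definition metric_open {X : Type} (d : X -> X -> R) (U : X -> Prop) : Prop :=
  forall x, U x -> exists eps, 0 < eps /\ forall y, d x y < eps -> U y.

Definition metric_compact {X : Type} (d : X -> X -> R) : Prop :=
  forall (I : Type) (U : I -> X -> Prop),
    (forall i, metric_open d (U i)) ->
    (forall x, exists i, U i x) ->
    exists l : list I, forall x, exists i, List.In i l /\ U i x.

Definition lipschitz {X : Type} (d : X -> X -> R) (f : X -> R) : Prop :=
  exists L, 0 <= L /\ forall x y, Rabs (f x - f y) <= L * d x y.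

Definition in_Lip0 {X : Type} (d : X -> X -> R) (x0 : X) (f : X -> R) : Prop :=
  lipschitz d f /\ f x0 = 0.

Definition bounded_seq (a : nat -> R) : Prop :=
  exists M, forall n, Rabs (a n) <= M.

(* ((x_n,y_n))_n with x_n <> y_n is Lipschitz interpolating for Lip_0(X):
   the operator T f = ((f x_n - f y_n)/d(x_n,y_n))_n from Lip_0(X) to
   l_infinity is surjective. *)
Definition lipschitz_interpolating {X : Type} (d : X -> X -> R) (x0 : X)
    (x y : nat -> X) : Prop :=
  (forall n, x n <> y n) /\
  forall a : nat -> R, bounded_seq a ->
    exists f : X -> R, in_Lip0 d x0 f /\
      forall n, (f (x n) - f (y n)) / d (x n) (y n) = a n.

(* Suppose d(x_n, y_n) >= eps for infinitely many n.  Compactness yields a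
   cluster point (p, q) of those pairs, hence a subsequence n_k along which
   x_{n_k} -> p and y_{n_k} -> q.  Interpolate the signs +1 at n_{2k} and -1
   at n_{2k+1} by an L-Lipschitz f: the increments f(x_n) - f(y_n) are then
   d(x_n, y_n) at n_{2k} and -d(x_n, y_n) at n_{2k+1}, so
   2 eps <= L (d(x_{n_{2k}}, x_{n_{2k+1}}) + d(y_{n_{2k}}, y_{n_{2k+1}})),
   whose right-hand side tends to 0. *)

From Stdlib Require Import Reals Lra Lia Classical ClassicalEpsilon List.
Open Scope R_scope.

Definition infinitely_often (P : nat -> Prop) : Prop :=
  forall N, exists n, (N <= n)%nat /\ P n.

Definition strictly_increasing (phi : nat -> nat) : Prop :=
  forall k l, (k < l)%nat -> (phi k < phi l)%nat.

Definition radius (k : nat) : R := / (INR k + 1).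

Lemma radius_pos (k : nat) : 0 < radius k.
Proof. apply Rinv_0_lt_compat; pose proof (pos_INR k); lra. Qed.

Lemma radius_le (k k' : nat) : (k <= k')%nat -> radius k' <= radius k.
Proof.
  intros Hk; apply Rinv_le_contravar.
  - pose proof (pos_INR k); lra.
  - apply le_INR in Hk; lra.
Qed.

Lemma radius_vanishing (C c : R) : (forall k, c <= C * radius k) -> c <= 0.
Proof.
  intros Hc; apply Rnot_lt_le; intros Hpos.
  destruct (INR_unbounded (C / c)) as [k Hk].
  assert (HCk : C < c * (INR k + 1)).
  { apply (Rmult_lt_compat_l c) in Hk; [|exact Hpos].
    replace (c * (C / c)) with C in Hk by (field; lra); lra. }
  specialize (Hc k); unfold radius in Hc.
  apply (Rmult_le_compat_r (INR k + 1)) in Hc; [|pose proof (pos_INR k); lra].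
  rewrite Rmult_assoc, Rinv_l in Hc; [lra|pose proof (pos_INR k); lra].
Qed.

Lemma not_cv_0_infinitely_often (u : nat -> R) :
  (forall n, 0 <= u n) -> ~ Un_cv u 0 ->
  exists eps, 0 < eps /\ infinitely_often (fun n => eps <= u n).
Proof.
  intros Hu Hcv; apply NNPP; intros Hno; apply Hcv; intros eps Heps.
  apply NNPP; intros HN; apply Hno; exists eps; split; [exact Heps|]; intros N.
  apply NNPP; intros Hfar; apply HN; exists N; intros n Hn.
  unfold R_dist; rewrite Rminus_0_r, Rabs_right by (apply Rle_ge, Hu).
  apply Rnot_le_lt; intros Hle; apply Hfar; exists n; split; [lia|exact Hle].
Qed.

Fixpoint select (g : nat * nat -> nat) (k : nat) : nat :=
  match k with
  | O => g (O, O)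
  | S k' => g (k, S (select g k'))
  end.

Lemma subsequence_of_infinitely_often (P : nat -> nat -> Prop) :
  (forall k, infinitely_often (P k)) ->
  exists phi : nat -> nat,
    (forall k, P k (phi k)) /\ strictly_increasing phi.
Proof.
  intros HP.
  destruct (choice (fun kN n => (snd kN <= n)%nat /\ P (fst kN) n)) as [g Hg].
  { intros [k N]; exact (HP k N). }
  assert (Hstep : forall k, (select g k < select g (S k))%nat)
    by (intros k; apply (Hg (S k, S (select g k)))).
  exists (select g); split.
  - intros [|k]; [apply (Hg (O, O))|apply (Hg (S k, _))].
  - intros k l Hkl; induction Hkl as [|l Hkl IH]; [apply Hstep|].
    specialize (Hstep l); lia.
Qed.

Section CompactMetric.

Variables (X : Type) (d : X -> X -> R).
Hypotheses (Hd : is_metric d) (Hc : metric_compact d).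

Lemma ball_open (q : X) (r : R) : metric_open d (fun w => d q w < r).
Proof.
  destruct Hd as (_ & _ & _ & Htri).
  intros w Hw; exists (r - d q w); split; [lra|].
  intros v Hv; specialize (Htri q w v); lra.
Qed.

Lemma dist_lt_via_center (p a b : X) (r : R) :
  d p a < r -> d p b < r -> d a b < 2 * r.
Proof.
  destruct Hd as (_ & _ & Hsym & Htri).
  intros Ha Hb; specialize (Htri a p b); rewrite (Hsym a p) in Htri; lra.
Qed.

(* If q is no cluster point, a single level m serves both as radius index and
   as threshold for q.  Finitely many balls of radius [radius (m q)] cover X,
   and they miss every z n with n >= M in P M, M the largest of their levels. *)
Lemma compact_cluster_point (z : nat -> X) (P : nat -> nat -> Prop) :
  (forall k k' n, (k <= k')%nat -> P k' n -> P k n) ->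
  (forall k, infinitely_often (P k)) ->
  exists q, forall k, infinitely_often (fun n => P k n /\ d q (z n) < radius k).
Proof.
  intros HP Hinf; apply NNPP; intros Hno.
  pose proof Hd as (_ & Hzero & _ & _).
  assert (Hfar : forall q, exists m,
             forall n, (m <= n)%nat -> P m n -> radius m <= d q (z n)).
  { intros q.
    destruct (not_all_ex_not _ _ (not_ex_all_not _ _ Hno q)) as [k Hk].
    destruct (not_all_ex_not _ _ Hk) as [N HN].
    exists (Nat.max k N); intros n Hn HPn; apply Rnot_lt_le; intros Hlt.
    apply HN; exists n; split; [lia|split].
    - exact (HP _ _ _ (Nat.le_max_l k N) HPn).
    - eapply Rlt_le_trans; [exact Hlt|apply radius_le; lia]. }
  destruct (choice _ Hfar) as [m Hm].
  destruct (Hc X (fun q w => d q w < radius (m q))) as [l Hl].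
  - intros q; apply ball_open.
  - intros w; exists w; rewrite (proj2 (Hzero w w) eq_refl); apply radius_pos.
  - set (M := list_max (map m l)).
    assert (HmM : forall q, In q l -> (m q <= M)%nat).
    { intros q Hq.
      assert (Hall : Forall (fun k => (k <= M)%nat) (map m l))
        by (apply list_max_le; lia).
      rewrite Forall_forall in Hall; apply Hall, in_map, Hq. }
    destruct (Hinf M M) as [n [Hn HPn]].
    destruct (Hl (z n)) as [q [Hq Hqz]].
    pose proof (Hm q n (Nat.le_trans _ _ _ (HmM q Hq) Hn) (HP _ _ _ (HmM q Hq) HPn)).
    lra.
Qed.

Lemma compact_cluster_pair (x y : nat -> X) (P : nat -> Prop) :
  infinitely_often P ->
  exists p q, forall k, infinitely_often
    (fun n => P n /\ d p (x n) < radius k /\ d q (y n) < radius k).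
Proof.
  intros HP.
  destruct (compact_cluster_point x (fun _ => P)) as [p Hp]; [auto|auto|].
  destruct (compact_cluster_point y (fun k n => P n /\ d p (x n) < radius k))
    as [q Hq].
  - intros k k' n Hk [HPn Hx]; split; [exact HPn|].
    eapply Rlt_le_trans; [exact Hx|apply radius_le, Hk].
  - exact Hp.
  - exists p, q; intros k N.
    destruct (Hq k N) as [n [Hn [[HPn Hx] Hy]]]; exists n; auto.
Qed.

End CompactMetric.

Lemma alternating_signs (phi : nat -> nat) :
  strictly_increasing phi ->
  exists a : nat -> R, bounded_seq a /\
    forall k, a (phi (2 * k)%nat) = 1 /\ a (phi (2 * k + 1)%nat) = -1.
Proof.
  intros Hphi.
  exists (fun n => if excluded_middle_informative (exists k, n = phi (2 * k)%nat)
                   then 1 else -1); split.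
  - exists 1; intros n; destruct (excluded_middle_informative _);
      unfold Rabs; destruct (Rcase_abs _); lra.
  - intros k; split.
    + destruct (excluded_middle_informative _) as [_|Hne]; [reflexivity|].
      exfalso; apply Hne; exists k; reflexivity.
    + destruct (excluded_middle_informative _) as [[j Hj]|_]; [exfalso|reflexivity].
      destruct (Nat.lt_trichotomy (2 * k + 1) (2 * j)) as [H|[H|H]];
        [apply Hphi in H|lia|apply Hphi in H]; lia.
Qed.

Lemma lipschitz_opposite_increments {X : Type} (d : X -> X -> R) (f : X -> R)
    (L : R) (u v u' v' : X) :
  (forall s t, Rabs (f s - f t) <= L * d s t) ->
  f u - f v = d u v -> f u' - f v' = - d u' v' ->
  d u v + d u' v' <= L * (d u u' + d v v').
Proof.
  intros Hf Huv Hu'v'.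
  pose proof (Rle_abs (f u - f u')) as Hu; pose proof (Hf u u').
  pose proof (Rle_abs (f v' - f v)) as Hv; rewrite Rabs_minus_sym in Hv.
  pose proof (Hf v v').
  lra.
Qed.

Lemma interpolating_alternating_bound {X : Type} (d : X -> X -> R) (x0 : X)
    (x y : nat -> X) (phi : nat -> nat) :
  is_metric d -> lipschitz_interpolating d x0 x y ->
  strictly_increasing phi ->
  exists L, 0 <= L /\ forall k,
    let n := phi (2 * k)%nat in let m := phi (2 * k + 1)%nat in
    d (x n) (y n) + d (x m) (y m) <= L * (d (x n) (x m) + d (y n) (y m)).
Proof.
  intros (_ & Hzero & _ & _) [Hneq Hint] Hphi.
  destruct (alternating_signs phi Hphi) as [a [Ha Hsign]].
  destruct (Hint a Ha) as [f [[[L [HL Hf]] _] Hslope]].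
  assert (Hinc : forall n, f (x n) - f (y n) = a n * d (x n) (y n)).
  { intros n.
    assert (Hdn : d (x n) (y n) <> 0) by (intros H0; apply (Hneq n), Hzero, H0).
    rewrite <- (Hslope n); field; exact Hdn. }
  exists L; split; [exact HL|]; intros k; cbv zeta.
  destruct (Hsign k) as [Hn Hm].
  apply (lipschitz_opposite_increments d f); [exact Hf| |].
  - rewrite Hinc, Hn; ring.
  - rewrite Hinc, Hm; ring.
Qed.

Theorem proposition4p1 (X : Type) (d : X -> X -> R) (x0 : X)
    (x y : nat -> X) :
  is_metric d ->
  metric_compact d ->
  lipschitz_interpolating d x0 x y ->
  Un_cv (fun n => d (x n) (y n)) 0.
Proof.
  intros Hd Hc Hint; pose proof Hd as (Hpos & _ & _ & _).
  apply NNPP; intros Hcv.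
  destruct (not_cv_0_infinitely_often _ (fun n => Hpos (x n) (y n)) Hcv)
    as (eps & Heps & Hfar).
  destruct (compact_cluster_pair X d Hd Hc x y _ Hfar) as (p & q & Hnear).
  destruct (subsequence_of_infinitely_often _ Hnear) as (phi & Hphi & Hincr).
  destruct (interpolating_alternating_bound d x0 x y phi Hd Hint Hincr)
    as (L & HL & Hbound).
  apply (Rlt_not_le _ _ Heps), (radius_vanishing (2 * L)); intros k.
  destruct (Hphi (2 * k)%nat) as (Hn & Hxn & Hyn).
  destruct (Hphi (2 * k + 1)%nat) as (Hm & Hxm & Hym).
  pose proof (radius_le k (2 * k) ltac:(lia)).
  pose proof (radius_le k (2 * k + 1) ltac:(lia)).
  specialize (Hbound k); cbv zeta in Hbound.
  set (n := phi (2 * k)%nat) in *; set (m := phi (2 * k + 1)%nat) in *.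
  pose proof (dist_lt_via_center X d Hd p (x n) (x m) (radius k)
                ltac:(lra) ltac:(lra)) as Hxnm.
  pose proof (dist_lt_via_center X d Hd q (y n) (y m) (radius k)
                ltac:(lra) ltac:(lra)) as Hynm.
  assert (L * (d (x n) (x m) + d (y n) (y m)) <= L * (4 * radius k))
    by (apply Rmult_le_compat_l; lra).
  lra.
Qed.
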